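(* Let $n\ge 5$. Then no subset $R\subseteq V_2$ of size $n-2$ such that any two distinct vertices of $R$ are at distance $2$ in $H(n)$ is a doubly resolving set of $H(n)$.
   Context: For $n\ge 5$, $H(n)$ is the graph with vertex set $V_1\cup V_2$, where $V_1=\{v_1,\dots,v_n\}$ and $V_2=\{v_iv_j: 1\le i<j\le n\}$ (each $v_iv_j$ a single vertex), and where $v_r\in V_1$ is adjacent to $v_iv_j\in V_2$ iff $r=i$ or $r=j$; there are no other edges. $d(u,v)$ is the shortest-path distance. For an ordered set $Q=\{q_1,\dots,q_l\}$ of vertices, $r(x|Q)=(d(x,q_1),\dots,d(x,q_l))$. $Q$ is a doubly resolving set of a graph $G$ if for any two distinct vertices $x,y$ of $G$, $r(x|Q)-r(y|Q)\neq\lambda(1,\dots,1)$ for every integer $\lambda$. *)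

From HB Require Import structures.
From mathcomp Require Import all_boot all_order all_algebra.
Set Implicit Arguments. Unset Strict Implicit. Unset Printing Implicit Defensive.

Section Dist.
Variables (T : finType) (e : rel T).

Fixpoint ball (k : nat) (x : T) : {set T} :=
  match k with
  | 0 => [set x]
  | k'.+1 => ball k' x :|: [set y | [exists z in ball k' x, e z y]]
  end.

(* shortest-path distance: least k with y in ball k x
   (equals #|T| if y is unreachable; H(n) is connected, so this never occurs) *)
Definition gdist (x y : T) : nat := find (fun k => y \in ball k x) (iota 0 #|T|).
End Dist.

(* V2 vertices: pairs (i, j) with i < j, standing for v_i v_j *)
Definition pairT (n : nat) := {p : 'I_n * 'I_n | p.1 < p.2}.

(* vertices: inl r = v_r in V1, inr p = v_i v_j in V2 *)
Definition Hvert (n : nat) : finType := ('I_n + pairT n)%type.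

Definition Hadj (n : nat) : rel (Hvert n) := fun x y =>
  match x, y with
  | inl r, inr p => (r == (val p).1) || (r == (val p).2)
  | inr p, inl r => (r == (val p).1) || (r == (val p).2)
  | _, _ => false
  end.

Definition Hdist (n : nat) (x y : Hvert n) : nat := gdist (@Hadj n) x y.

Definition inV2 (n : nat) (x : Hvert n) : bool := if x is inr _ then true else false.

Definition doubly_resolving (n : nat) (Q : {set Hvert n}) : Prop :=
  forall x y : Hvert n, x <> y ->
    ~ (exists lambda : int,
         forall q, q \in Q -> ((Hdist x q)%:Z - (Hdist y q)%:Z)%R = lambda).

From mathcomp Require Import all_boot all_order all_algebra zify.
Set Implicit Arguments. Unset Strict Implicit. Unset Printing Implicit Defensive.

(* Distances in H(n) have a closed form: 2 between distinct vertices of V1, 1 or 3 from v_r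
   to v_iv_j according as r is in {i, j} or not, and 2 or 4 between distinct vertices of V2
   according as the pairs meet or not. So the hypothesis on R says that its n - 2 pairs
   pairwise intersect, and such a family is a star (all pairs contain some c) or lies in a
   triangle {a, b, c}. For a star, n - 2 pairs through c leave some k <> c uncovered, and then
   v_c and v_cv_k are at distances 1 and 2 from every vertex of R. For a triangle, two vertices
   v_d, v_e off the triangle (n >= 5) are both at distance 3 from every vertex of R. *)


Lemma find_leq_iota d N : d < N -> find (leq d) (iota 0 N) = d.
Proof.
move=> ltdN; rewrite -(subnKC (ltnW ltdN)) iotaD find_cat size_iota add0n.
have -> : has (leq d) (iota 0 d) = false.
  by apply/hasP => -[k]; rewrite mem_iota /=; lia.
by case: (N - d) ltdN => [|k] /=; [lia | rewrite leqnn addn0].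
Qed.

Section PotentialDistance.
Variables (T : finType) (e : rel T) (f : T -> T -> nat).
Hypothesis f_eq0 : forall x y, (f x y == 0) = (x == y).
Hypothesis f_adj : forall x z y, e z y -> f x y <= (f x z).+1.
Hypothesis f_step : forall x y, 0 < f x y -> exists2 z, f x z = (f x y).-1 & e z y.

Lemma ball_potential k x : ball e k x = [set y | f x y <= k].
Proof.
elim: k => [|k IHk] /=; apply/setP => y; rewrite !inE.
  by rewrite leqn0 f_eq0 eq_sym.
rewrite IHk inE; apply/orP/idP => [[/leqW //|/existsP[z]]|fxy_le].
  by rewrite inE => /andP[fxz_le /(f_adj x)]; lia.
case: (leqP (f x y) k) => [|fxy_gt]; [by left | right].
have [z fxz ezy] := f_step (leq_ltn_trans (leq0n k) fxy_gt).
by apply/existsP; exists z; rewrite inE ezy andbT fxz; lia.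
Qed.

Lemma potential_reach x y i : i <= f x y -> exists z, f x z = i.
Proof.
move fxy: (f x y) => d; elim: d y i fxy => [|d IHd] y i fxy.
  by rewrite leqn0 => /eqP->; exists x; apply/eqP; rewrite f_eq0.
rewrite leq_eqVlt ltnS => /orP[/eqP->|le_id]; first by exists y.
have [z fxz _] := f_step (ltac:(by rewrite fxy) : 0 < f x y).
by apply: (IHd z) le_id; rewrite fxz fxy.
Qed.

Lemma potential_lt_card x y : f x y < #|T|.
Proof.
have := size_iota 0 (f x y).+1; rewrite cardE -(size_map (f x)) => <-.
apply: uniq_leq_size (iota_uniq _ _) _ => i; rewrite mem_iota ltnS => /potential_reach[z <-].
by apply: map_f; rewrite mem_enum.
Qed.

Lemma gdist_potential x y : gdist e x y = f x y.
Proof.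
rewrite /gdist (eq_find (a2 := leq (f x y))); first exact/find_leq_iota/potential_lt_card.
by move=> k; rewrite ball_potential inE.
Qed.

End PotentialDistance.

Section Pairs.
Variable n : nat.
Implicit Types (r s t : 'I_n) (p q : pairT n).

Definition lo p : 'I_n := (val p).1.
Definition hi p : 'I_n := (val p).2.

Lemma lo_neq_hi p : lo p != hi p.
Proof. by rewrite neq_ltn (svalP p). Qed.

Definition incident r p : bool := (r == lo p) || (r == hi p).

Definition meets p q : bool := [exists r, incident r p && incident r q].

Definition other r p : 'I_n := if r == lo p then hi p else lo p.

Lemma incident_lo p : incident (lo p) p.
Proof. by rewrite /incident eqxx. Qed.

Lemma incident_hi p : incident (hi p) p.
Proof. by rewrite /incident eqxx orbT. Qed.

Lemma meets_refl p : meets p p.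
Proof. by apply/existsP; exists (lo p); rewrite incident_lo. Qed.

Lemma exists_pair r s : r != s -> exists p, incident r p && incident s p.
Proof.
case: (ltngtP r s) => [rs|sr|/val_inj->]; last by rewrite eqxx.
- by exists (exist _ (r, s) rs); rewrite /incident /lo /hi /= !eqxx orbT.
- by exists (exist _ (s, r) sr); rewrite /incident /lo /hi /= !eqxx orbT.
Qed.

Lemma other_neq r p : other r p != r.
Proof.
rewrite /other; case: ifP => [/eqP->|/negbT]; last by rewrite eq_sym.
by rewrite eq_sym lo_neq_hi.
Qed.

Lemma incident_other r p : incident (other r p) p.
Proof. by rewrite /other; case: ifP; rewrite ?incident_lo ?incident_hi. Qed.

Lemma incident2 r s t p : r != s -> incident r p -> incident s p ->
  incident t p = (t == r) || (t == s).
Proof.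
rewrite /incident => rs /orP[]/eqP rE /orP[]/eqP sE; move: rs; rewrite rE sE ?eqxx //.
by rewrite orbC.
Qed.

Lemma incidentE r t p : incident r p -> incident t p = (t == r) || (t == other r p).
Proof. by move=> rp; rewrite (@incident2 r (other r p)) ?incident_other // eq_sym other_neq. Qed.

Lemma meets_other r p q : meets p q -> incident r p -> ~~ incident r q ->
  incident (other r p) q.
Proof.
case/existsP=> s /andP[sp sq] rp; rewrite (incidentE s rp) in sp.
by case/orP: sp sq => /eqP-> // ->.
Qed.

Lemma meeting_pairs_star_or_triangle (P : {pred pairT n}) :
  {in P &, forall p q, meets p q} ->
  (exists c, {in P, forall p, incident c p}) \/
  (exists S : {set 'I_n}, #|S| <= 3 /\ {in P, forall p r, incident r p -> r \in S}).
Proof.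
move=> meetP; case: (boolP [exists p, p \in P]) => [/existsP[p1 Pp1]|/existsPn P0]; last first.
  by right; exists set0; rewrite cards0; split=> // p; rewrite (negbTE (P0 p)).
set a := lo p1; set b := hi p1.
have [/forall_inP a_star|/forall_inPn[p2 Pp2 a_p2]] := boolP [forall (p | p \in P), incident a p].
  by left; exists a.
have [/forall_inP b_star|/forall_inPn[p3 Pp3 b_p3]] := boolP [forall (p | p \in P), incident b p].
  by left; exists b.
have b_p2 : incident b p2.
  by have := meets_other (meetP _ _ Pp1 Pp2) (incident_lo p1) a_p2; rewrite /other eqxx.
set c := other b p2.
have c_p2 : incident c p2 := incident_other b p2.
have c_p3 : incident c p3 := meets_other (meetP _ _ Pp2 Pp3) b_p2 b_p3.
have a_p3 : incident a p3.
  have := meets_other (meetP _ _ Pp1 Pp3) (incident_hi p1) b_p3.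
  by rewrite /other eq_sym (negbTE (lo_neq_hi p1)).
have ab : a != b := lo_neq_hi p1.
have bc : b != c by rewrite eq_sym other_neq.
have ac : a != c by apply: contraNneq a_p2 => ->.
right; exists [set a; b; c]; split.
  by rewrite !cardsU !cards1; lia.
(* p1, p2, p3 are {a, b}, {b, c}, {a, c}: a pair with an endpoint r outside {a, b, c} would
   have to meet all three through its other endpoint. *)
have p2E t : incident t p2 = (t == b) || (t == c) := incident2 t bc b_p2 c_p2.
have p3E t : incident t p3 = (t == a) || (t == c) := incident2 t ac a_p3 c_p3.
move=> p Pp r rp; apply: contraT; rewrite !inE => rS.
have := meets_other (meetP _ _ Pp Pp3) rp; have := meets_other (meetP _ _ Pp Pp2) rp.
have := meets_other (meetP _ _ Pp Pp1) rp; rewrite !p2E !p3E /incident -/a -/b.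
by move: rS ab bc ac; rewrite -!val_eqE /=; lia.
Qed.

End Pairs.

Section HDistance.
Variable n : nat.
Implicit Types (x y z : Hvert n).

Definition hdist x y : nat :=
  match x, y with
  | inl r, inl s => if r == s then 0 else 2
  | inl r, inr p | inr p, inl r => if incident r p then 1 else 3
  | inr p, inr q => if p == q then 0 else if meets p q then 2 else 4
  end.

Lemma hdist_eq0 x y : (hdist x y == 0) = (x == y).
Proof.
case: x y => [r|p] [s|q]; rewrite -sum_eqE /=.
- by case: (r == s).
- by case: ifP.
- by case: ifP.
- by case: (p == q) => //; case: ifP.
Qed.

Lemma hdist_adj x z y : Hadj z y -> hdist x y <= (hdist x z).+1.
Proof.
case: x z y => [r|p] [s|q] [t|u] //=.
- move=> su; case: (eqVneq r s) => [->|_]; last by case: ifP.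
  by rewrite [incident s u]su.
- by repeat case: ifP.
- move=> su; case sp: (incident s p); last by repeat case: ifP.
  suff -> : meets p u by case: ifP.
  by apply/existsP; exists s; rewrite sp.
- move=> tq; case: (eqVneq p q) => [->|_]; last by repeat case: ifP.
  by rewrite [incident t q]tq.
Qed.

Lemma hdist_step x y : 0 < hdist x y -> exists2 z, hdist x z = (hdist x y).-1 & Hadj z y.
Proof.
case: x y => [r|p] [s|q] /=.
- case: (eqVneq r s) => // /exists_pair[p /andP[rp sp]] _.
  by exists (inr p); rewrite /= ?rp.
- case rq: (incident r q) => _; first by exists (inl r); rewrite /= ?eqxx.
  exists (inl (lo q)); last exact: incident_lo.
  by move: rq; rewrite /= /incident; case: eqP.
- case sp: (incident s p) => _; first by exists (inr p); rewrite /= ?eqxx.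
  have /exists_pair[P /andP[pP sP]] : lo p != s by apply: contraFneq sp => <-; apply: incident_lo.
  exists (inr P) => //=; have -> : p == P = false by apply: contraFF sp => /eqP->.
  by have -> : meets p P by apply/existsP; exists (lo p); rewrite incident_lo.
- case: (eqVneq p q) => // pq _; case m: (meets p q).
    by case/existsP: m => r /andP[rp rq]; exists (inl r); rewrite /= ?rp.
  exists (inl (lo q)); last exact: incident_lo.
  suff -> : incident (lo q) p = false by [].
  by apply: contraFF m => qp; apply/existsP; exists (lo q); rewrite qp incident_lo.
Qed.

Lemma HdistE x y : Hdist x y = hdist x y.
Proof. exact: gdist_potential hdist_eq0 hdist_adj hdist_step x y. Qed.
End HDistance.

Section NotDoublyResolving.
Variables (n : nat) (Q : {set Hvert n}) (QV2 : forall x, x \in Q -> inV2 x).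

Lemma not_doubly_resolving_avoiding d e : d != e ->
  (forall p, inr p \in Q -> ~~ incident d p && ~~ incident e p) -> ~ doubly_resolving Q.
Proof.
move=> de Qde dres; apply: (dres (inl d) (inl e)); first by case=> /eqP; rewrite (negbTE de).
exists 0%R => -[r|p] Qx; first by have := QV2 Qx.
by rewrite !HdistE /=; case/andP: (Qde p Qx) => /negbTE-> /negbTE->.
Qed.

Lemma not_doubly_resolving_centered c k : c != k ->
  (forall p, inr p \in Q -> incident c p && ~~ incident k p) -> ~ doubly_resolving Q.
Proof.
move=> ck Qck dres; have [P /andP[cP kP]] := exists_pair ck.
apply: (dres (inl c) (inr P)) => //; exists (-1)%R => -[r|p] Qx; first by have := QV2 Qx.
case/andP: (Qck p Qx) => cp kp; rewrite !HdistE /= cp.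
have -> : P == p = false by apply: contraNF kp => /eqP<-.
by have -> : meets P p by apply/existsP; exists c; rewrite cP cp.
Qed.

Lemma not_doubly_resolving_support (S : {set 'I_n}) : #|S|.+2 <= n ->
  (forall p, inr p \in Q -> forall r, incident r p -> r \in S) -> ~ doubly_resolving Q.
Proof.
move=> Sn supp; have : 1 < #|~: S| by have := cardsC S; rewrite card_ord; lia.
case/card_gt1P=> d [e [dS eS de]]; apply: (not_doubly_resolving_avoiding de) => p Qp.
by rewrite !inE in dS eS; rewrite (contra (supp p Qp d)) ?(contra (supp p Qp e)).
Qed.

Lemma not_doubly_resolving_star c : #|Q|.+1 < n ->
  (forall p, inr p \in Q -> incident c p) -> ~ doubly_resolving Q.
Proof.
move=> Qn star; pose g (x : Hvert n) := if x is inr p then other c p else c.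
have : 0 < #|~: (c |: g @: Q)|.
  have := cardsC (c |: g @: Q); have := cardsU1 c (g @: Q); have := leq_imset_card g Q.
  rewrite card_ord; lia.
case/card_gt0P=> k; rewrite !inE negb_or => /andP[kc kg].
apply: (not_doubly_resolving_centered (c := c) (k := k)); first by rewrite eq_sym.
move=> p Qp; rewrite star // (incidentE k (star p Qp)) negb_or kc /=.
by apply: contraNneq kg => ->; apply: imset_f Qp.
Qed.
End NotDoublyResolving.

Theorem proposition3p2 (n : nat) : 5 <= n ->
  forall R : {set Hvert n},
    (forall x, x \in R -> inV2 x) ->
    #|R| = n - 2 ->
    (forall x y, x \in R -> y \in R -> x != y -> Hdist x y = 2) ->
    ~ doubly_resolving R.
Proof.
move=> n5 R RV2 cardR dist2.
have meetR : {in [pred p | inr p \in R] &, forall p q, meets p q}.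
  move=> p q Rp Rq; case: (eqVneq p q) => [<-|pq]; first exact: meets_refl.
  have := dist2 _ _ Rp Rq; rewrite HdistE /= -sum_eqE /= (negbTE pq).
  by case: ifP => // _ /(_ isT).
have [[c star]|[S [cardS supp]]] := meeting_pairs_star_or_triangle meetR.
  by apply: (not_doubly_resolving_star RV2 (c := c)) => //; lia.
apply: (not_doubly_resolving_support RV2 (S := S)) => [|p]; [lia | exact: supp].
Qed.
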